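(* Let $X\ge 0$ be a gamble and let $\underline{P}$ be a 2-coherent lower prevision (defined on a domain containing the gambles involved) with conjugate upper prevision $\overline{P}$. Then $[\underline{P}(X)]^2\le\underline{P}(X^2)$ and $[\overline{P}(X)]^2\le\overline{P}(X^2)$.
   Context: $\Pi$ is a partition of the sure event into pairwise disjoint non-impossible events; a gamble is a bounded map $X:\Pi\to\mathbb{R}$. A lower prevision $\underline{P}:\mathcal{D}\to\mathbb{R}$ is 2-coherent iff for all $X_0,X_1\in\mathcal{D}$, $s_1\ge 0$, $s_0\in\mathbb{R}$, $\sup[s_1(X_1-\underline{P}(X_1))-s_0(X_0-\underline{P}(X_0))]\ge 0$; its conjugate is $\overline{P}(Y)=-\underline{P}(-Y)$. *)

From HB Require Import structures.
From mathcomp Require Import all_boot all_order all_algebra.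
From mathcomp Require Import classical_sets reals.
Set Implicit Arguments. Unset Strict Implicit. Unset Printing Implicit Defensive.
Import Order.TTheory GRing.Theory Num.Theory.
Local Open Scope classical_set_scope.
Local Open Scope ring_scope.

(* The partition Pi is modelled as a type whose elements are the atoms;
   a gamble is a bounded real map on Pi. *)
Definition gamble (R : realType) (Pi : Type) (X : Pi -> R) : Prop :=
  exists M : R, forall w, `|X w| <= M.

Definition gneg (R : realType) (Pi : Type) (X : Pi -> R) : Pi -> R :=
  fun w => - X w.
Definition gsq (R : realType) (Pi : Type) (X : Pi -> R) : Pi -> R :=
  fun w => X w ^+ 2.

Definition two_coherent (R : realType) (Pi : Type)
    (D : set (Pi -> R)) (LP : (Pi -> R) -> R) : Prop :=
  forall X0 X1 : Pi -> R, D X0 -> D X1 ->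
  forall s1 s0 : R, 0 <= s1 ->
    0 <= sup (range (fun w => s1 * (X1 w - LP X1) - s0 * (X0 w - LP X0))).

Definition conj_upper (R : realType) (Pi : Type)
    (LP : (Pi -> R) -> R) (Y : Pi -> R) : R :=
  - LP (gneg Y).

(* The gain 2a(X - a) - (X^2 - b), with a = P(X) and b = P(X^2), equals
   (b - a^2) - (X - a)^2 and is thus bounded above by b - a^2; 2-coherence
   forces its supremum to be nonnegative, whence a^2 <= b.  The stake 2a on X
   must be nonnegative, which is where X >= 0 (hence P(X) >= 0) enters.  For
   the upper prevision the same completion of the square is applied to -X and
   -X^2, with the nonnegative stake on -X^2, so no sign condition is needed. *)
From mathcomp Require Import all_boot all_order all_algebra.
From mathcomp Require Import classical_sets reals.
From mathcomp Require Import ring lra.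
Set Implicit Arguments. Unset Strict Implicit. Unset Printing Implicit Defensive.
Import Order.TTheory GRing.Theory Num.Theory.
Local Open Scope classical_set_scope.
Local Open Scope ring_scope.

Section TwoCoherent.

Variables (R : realType) (Pi : Type).
Hypothesis Pi_ne : inhabited Pi.
Variables (D : set (Pi -> R)) (LP : (Pi -> R) -> R).
Hypothesis LP_coh : two_coherent D LP.

Lemma two_coherent_bound (X0 X1 : Pi -> R) (s1 s0 K : R) :
  D X0 -> D X1 -> 0 <= s1 ->
  (forall w, s1 * (X1 w - LP X1) - s0 * (X0 w - LP X0) <= K) -> 0 <= K.
Proof.
move=> DX0 DX1 s1_ge0 le_K.
apply: le_trans (LP_coh DX0 DX1 s0 s1_ge0) _.
apply: ge_sup; last by move=> _ [w _ <-].
by case: Pi_ne => w; exists (s1 * (X1 w - LP X1) - s0 * (X0 w - LP X0)), w.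
Qed.

Lemma two_coherent_lb (X : Pi -> R) (c : R) :
  D X -> (forall w, c <= X w) -> c <= LP X.
Proof.
move=> DX c_le; rewrite -subr_ge0.
apply: (two_coherent_bound (s1 := 0) (s0 := 1) DX DX) => // w.
by have := c_le w; lra.
Qed.

Lemma two_coherent_sqr_le (X : Pi -> R) :
  D X -> D (gsq X) -> 0 <= LP X -> LP X ^+ 2 <= LP (gsq X).
Proof.
move=> DX DX2 LPX_ge0; rewrite -subr_ge0.
have stake_ge0 : 0 <= 2 * LP X by rewrite mulr_ge0.
apply: (two_coherent_bound (s0 := 1) DX2 DX stake_ge0) => w.
set a := LP X; set b := LP (gsq X); rewrite /gsq.
have -> : 2 * a * (X w - a) - 1 * (X w ^+ 2 - b) = (b - a ^+ 2) - (X w - a) ^+ 2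
  by ring.
by rewrite lerBlDr lerDl sqr_ge0.
Qed.

Lemma conj_upper_sqr_le (X : Pi -> R) :
  D (gneg X) -> D (gneg (gsq X)) ->
  conj_upper LP X ^+ 2 <= conj_upper LP (gsq X).
Proof.
move=> DnX DnX2; rewrite /conj_upper -subr_ge0.
set c := LP (gneg X); set d := LP (gneg (gsq X)).
apply: (two_coherent_bound (s0 := -2 * c) DnX DnX2 ler01) => w.
rewrite /gneg /gsq -/c -/d.
have -> : 1 * (- X w ^+ 2 - d) - -2 * c * (- X w - c)
        = (- d - (- c) ^+ 2) - (X w + c) ^+ 2 by ring.
by rewrite lerBlDr lerDl sqr_ge0.
Qed.

End TwoCoherent.

Theorem corollary3 (R : realType) (Pi : Type) (Pi_ne : inhabited Pi)
    (D : set (Pi -> R)) (LP : (Pi -> R) -> R)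
    (D_gambles : forall Y, D Y -> gamble Y)
    (LP_coh : two_coherent D LP)
    (X : Pi -> R) (X_gamble : gamble X) (X_ge0 : forall w, 0 <= X w) :
  (D X -> D (gsq X) -> LP X ^+ 2 <= LP (gsq X)) /\
  (D (gneg X) -> D (gneg (gsq X)) ->
     conj_upper LP X ^+ 2 <= conj_upper LP (gsq X)).
Proof.
split=> [DX DX2|]; last exact: (conj_upper_sqr_le Pi_ne LP_coh).
apply: (two_coherent_sqr_le Pi_ne LP_coh DX DX2).
exact: (two_coherent_lb Pi_ne LP_coh DX X_ge0).
Qed.
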